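(* For each integer $p>2$, there exists a connected $(7p-3)$-regular integral graph with $12p$ vertices.
   Context: A graph is integral if all eigenvalues of its adjacency matrix are integers. *)

From mathcomp Require Import all_boot all_order all_algebra all_field.
Set Implicit Arguments. Unset Strict Implicit. Unset Printing Implicit Defensive.
Import Order.TTheory GRing.Theory Num.Theory.
Local Open Scope ring_scope.

Definition simple_graph (n : nat) (e : rel 'I_n) : Prop :=
  symmetric e /\ irreflexive e.

Definition regular (n : nat) (e : rel 'I_n) (k : nat) : Prop :=
  forall x : 'I_n, #|[set y | e x y]| = k.

Definition connected_graph (n : nat) (e : rel 'I_n) : Prop :=
  forall x y : 'I_n, connect e x y.

Definition adjmx (n : nat) (e : rel 'I_n) : 'M[algC]_n :=
  \matrix_(i, j) (e i j)%:R.

Definition integral_graph (n : nat) (e : rel 'I_n) : Prop :=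
  forall a : algC, eigenvalue (adjmx e) a -> a \is a Num.int.

From mathcomp Require Import all_boot all_order all_algebra all_field.
From mathcomp Require Import mxtens zify.
Set Implicit Arguments. Unset Strict Implicit. Unset Printing Implicit Defensive.
Import Order.TTheory GRing.Theory Num.Theory.

(* The graph has vertex set 'I_12 x 'I_p: each layer carries two disjoint
   octahedra K_{2,2,2}, and two vertices in distinct layers are adjacent iff
   their first coordinates are distinct and not adjacent in the octahedra.
   Its adjacency matrix is an integer combination of products of the
   pairwise commuting matrices I_{12/d} (x) J_d (x) I_p (d = 1, 2, 6, 12) and
   I_12 (x) J_p, each of which satisfies P^2 = s P with s a positive integer.
   A common eigenvector of all of them inside an eigenspace of the adjacency
   matrix, obtained by repeatedly replacing v by v P when v P <> 0, sees each
   of them as an integer scalar, so the eigenvalue is an integer. *)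

Local Open Scope ring_scope.

Lemma quasi_idempotent_eigenvector (R : comPzRingType) n (P : 'M[R]_n) s (v : 'rV_n) :
  P *m P = s *: P -> v != 0 ->
  exists (w : 'rV_n) e, [/\ w != 0, (e == 0) || (e == s), w *m P = e *: w &
    forall Q c, comm_mx P Q -> v *m Q = c *: v -> w *m Q = c *: w].
Proof.
move=> PP v0; have [vP0 | vP_neq0] := eqVneq (v *m P) 0.
  by exists v, 0; rewrite eqxx scale0r.
exists (v *m P), s; rewrite eqxx orbT -mulmxA PP -scalemxAr.
by split=> // Q c PQ vQ; rewrite -mulmxA PQ mulmxA vQ -scalemxAl.
Qed.

Section IntEigenvector.
Variables (R : archiNumFieldType) (n : nat).
Implicit Types (w : 'rV[R]_n) (M N : 'M[R]_n).

Definition int_eigenvector w M := exists2 c : R, c \is a Num.int & w *m M = c *: w.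

Lemma int_eigenvectorD w M N :
  int_eigenvector w M -> int_eigenvector w N -> int_eigenvector w (M + N).
Proof.
by move=> [c c_int wM] [d d_int wN]; exists (c + d); rewrite ?rpredD // mulmxDr wM wN scalerDl.
Qed.

Lemma int_eigenvectorN w M : int_eigenvector w M -> int_eigenvector w (- M).
Proof. by move=> [c c_int wM]; exists (- c); rewrite ?rpredN // mulmxN wM scaleNr. Qed.

Lemma int_eigenvectorM w M N :
  int_eigenvector w M -> int_eigenvector w N -> int_eigenvector w (M *m N).
Proof.
move=> [c c_int wM] [d d_int wN]; exists (c * d); rewrite ?rpredM //.
by rewrite mulmxA wM -scalemxAl wN scalerA.
Qed.

Lemma int_eigenvector_eigenvalue w M a :
  w != 0 -> int_eigenvector w M -> w *m M = a *: w -> a \is a Num.int.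
Proof.
move=> w0 [c c_int ->] /eqP; rewrite -subr_eq0 -scalerBl scaler_eq0 (negbTE w0).
by rewrite orbF subr_eq0 => /eqP <-.
Qed.

Lemma common_int_eigenvector (A : 'M[R]_n) (Ps : seq 'M[R]_n) a (v : 'rV_n) :
  {in Ps, forall P, exists2 s, s \is a Num.int & P *m P = s *: P} ->
  {in Ps &, forall P Q, comm_mx P Q} -> {in Ps, forall P, comm_mx P A} ->
  v != 0 -> v *m A = a *: v ->
  exists2 w, w != 0 & w *m A = a *: w /\ {in Ps, forall P, int_eigenvector w P}.
Proof.
move=> + + + v0 vA; elim: Ps => [|P Ps IH] Ps_quasi Ps_comm PsA; first by exists v.
have sub : {subset Ps <= P :: Ps} by move=> Q QPs; rewrite inE QPs orbT.
have [w' w'0 [w'A w'Ps]] :=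
  IH (sub_in1 sub Ps_quasi) (sub_in2 sub Ps_comm) (sub_in1 sub PsA).
have PPs := mem_head P Ps.
have [s s_int PP] := Ps_quasi P PPs.
have [w [e [w0 e_0s wP preserve]]] := quasi_idempotent_eigenvector PP w'0.
exists w => //; split; first exact: preserve (PsA P PPs) w'A.
move=> Q; rewrite inE => /predU1P[-> | QPs].
  by exists e => //; case/orP: e_0s => /eqP->; rewrite ?rpred0.
have [c c_int w'Q] := w'Ps Q QPs.
by exists c => //; apply: preserve (Ps_comm P Q PPs (sub Q QPs)) w'Q.
Qed.

End IntEigenvector.

Section TensorBilinear.
Variables (R : comPzRingType) (m n p q : nat).
Implicit Types (A B : 'M[R]_(m, n)) (C D : 'M[R]_(p, q)).

Lemma tensmxDl A B C : (A + B) *t C = A *t C + B *t C.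
Proof. by apply/matrixP=> i j; rewrite !mxE mulrDl. Qed.

Lemma tensmxNl A C : (- A) *t C = - (A *t C).
Proof. by apply/matrixP=> i j; rewrite !mxE mulNr. Qed.

Lemma tensmxDr A C D : A *t (C + D) = A *t C + A *t D.
Proof. by apply/matrixP=> i j; rewrite !mxE mulrDr. Qed.

Lemma tensmxNr A C : A *t (- C) = - (A *t C).
Proof. by apply/matrixP=> i j; rewrite !mxE mulrN. Qed.

Lemma tensmxZl a A C : (a *: A) *t C = a *: (A *t C).
Proof. by apply/matrixP=> i j; rewrite !mxE mulrA. Qed.

Lemma tensmxZr a A C : A *t (a *: C) = a *: (A *t C).
Proof. by apply/matrixP=> i j; rewrite !mxE mulrCA. Qed.

End TensorBilinear.

Lemma comm_mx_tens (R : comPzRingType) m p (A B : 'M[R]_m) (C D : 'M[R]_p) :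
  comm_mx A B -> comm_mx C D -> comm_mx (A *t C) (B *t D).
Proof. by rewrite /comm_mx !tensmx_mul => -> ->. Qed.

Lemma const1_mx_sqr (R : pzSemiRingType) n :
  (const_mx 1 : 'M[R]_n) *m const_mx 1 = n%:R *: (const_mx 1 : 'M_n).
Proof.
apply/matrixP=> i j; rewrite !mxE (eq_bigr (fun _ => 1)) => [|k _]; last first.
  by rewrite !mxE mulr1.
by rewrite sumr_const card_ord mulr1.
Qed.

Local Close Scope ring_scope.

(* [blk d i k] says that i and k lie in the same block of d consecutive
   integers; on 'I_12 its matrix is I_{12/d} (x) J_d. *)
Definition blk (d i k : nat) : bool := i %/ d == k %/ d.
Definition octa (i k : nat) : bool := blk 6 i k && ~~ blk 2 i k.
Definition octa_compl (i k : nat) : bool := (i != k) && ~~ octa i k.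
Definition block_sizes : seq nat := [:: 1; 2; 6; 12].

Lemma octa_sym i k : octa i k = octa k i.
Proof. by rewrite /octa /blk eq_sym [k %/ 2 == _]eq_sym. Qed.

Lemma octa_irr i : octa i i = false.
Proof. by rewrite /octa /blk !eqxx. Qed.

Lemma octa_compl_sym i k : octa_compl i k = octa_compl k i.
Proof. by rewrite /octa_compl eq_sym octa_sym. Qed.

(* Finite checks over {0, ..., 11} are phrased with [nat] lists: big operators
   over 'I_12 do not reduce under [vm_compute]. *)
Definition sum12 (f : nat -> nat) : nat := sumn [seq f j | j <- iota 0 12].
Definition all12x12 (P : nat -> nat -> bool) : bool :=
  all (fun i => all (P i) (iota 0 12)) (iota 0 12).
Definition mul12 (r r' : nat -> nat -> bool) (i k : nat) : nat :=
  sum12 (fun j => r i j * r' j k).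

Lemma sum12E (f : nat -> nat) : \sum_(j < 12) f j = sum12 f.
Proof. by rewrite /sum12 -(big_mkord xpredT f) /index_iota subn0 sumnE big_map. Qed.

Lemma all12x12P P : all12x12 P -> forall i k : 'I_12, P i k.
Proof.
by move=> /allP P_all i k; apply: (allP (P_all i _)); rewrite mem_iota ltn_ord.
Qed.

Lemma blk_quasi_idempotent_check :
  all (fun d => all12x12 (fun i k => mul12 (blk d) (blk d) i k == d * blk d i k))
    block_sizes.
Proof. by vm_compute. Qed.

Lemma blk_comm_check :
  all (fun d => all (fun d' =>
    all12x12 (fun i k => mul12 (blk d) (blk d') i k == mul12 (blk d') (blk d) i k))
    block_sizes) block_sizes.
Proof. by vm_compute. Qed.

Lemma octa_blk_comm_check :
  all (fun d => all12x12 (fun i k =>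
    (mul12 (blk d) octa i k == mul12 octa (blk d) i k) &&
    (mul12 (blk d) octa_compl i k == mul12 octa_compl (blk d) i k))) block_sizes.
Proof. by vm_compute. Qed.

Lemma octa_blk_check :
  all12x12 (fun i k => (octa i k + blk 2 i k == blk 6 i k) &&
    (octa_compl i k + blk 6 i k + blk 1 i k == blk 12 i k + blk 2 i k)).
Proof. by vm_compute. Qed.

Lemma octa_degree_check :
  all (fun i => (sum12 (octa i) == 4) && (sum12 (octa_compl i) == 7)) (iota 0 12).
Proof. by vm_compute. Qed.

Lemma octa_compl_diameter_check :
  all12x12 (fun i k => has (fun j => octa_compl i j && octa_compl j k) (iota 0 12)).
Proof. by vm_compute. Qed.

Local Open Scope ring_scope.

Definition relmx (r : nat -> nat -> bool) : 'M[algC]_12 := \matrix_(i, k) (r i k)%:R.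
Notation blkmx d := (relmx (blk d)).

Lemma relmx_mulE r r' (i k : 'I_12) : (relmx r *m relmx r') i k = (mul12 r r' i k)%:R.
Proof.
rewrite !mxE /mul12 -sum12E natr_sum; apply: eq_bigr => j _.
by rewrite !mxE natrM.
Qed.

Lemma relmx_comm r r' :
  (forall i k : 'I_12, mul12 r r' i k = mul12 r' r i k) -> comm_mx (relmx r) (relmx r').
Proof. by move=> rr'; apply/matrixP=> i k; rewrite !relmx_mulE rr'. Qed.

Lemma blkmx_quasi_idempotent d :
  d \in block_sizes -> blkmx d *m blkmx d = d%:R *: blkmx d.
Proof.
move=> /(allP blk_quasi_idempotent_check) /all12x12P dd.
by apply/matrixP=> i k; rewrite relmx_mulE (eqP (dd i k)) !mxE natrM.
Qed.

Lemma blkmx_comm d d' :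
  d \in block_sizes -> d' \in block_sizes -> comm_mx (blkmx d) (blkmx d').
Proof.
move=> /(allP blk_comm_check) /allP dd /dd /all12x12P dd'.
by apply: relmx_comm => i k; apply/eqP.
Qed.

Lemma blkmx_comm_octa d : d \in block_sizes ->
  comm_mx (blkmx d) (relmx octa) /\ comm_mx (blkmx d) (relmx octa_compl).
Proof.
move=> /(allP octa_blk_comm_check) /all12x12P dd.
by split; apply: relmx_comm => i k; case/andP: (dd i k) => /eqP ? /eqP ?.
Qed.

Lemma relmx_octa : relmx octa = blkmx 6 - blkmx 2.
Proof.
apply/matrixP=> i k; have /andP[/eqP octaE _] := all12x12P octa_blk_check i k.
by rewrite !mxE -octaE natrD addrK.
Qed.

Lemma relmx_octa_compl : relmx octa_compl = blkmx 12 + blkmx 2 - blkmx 1 - blkmx 6.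
Proof.
apply/matrixP=> i k; have /andP[_ /eqP complE] := all12x12P octa_blk_check i k.
by rewrite !mxE -natrD -complE !natrD !addrK.
Qed.

Definition layered_adj p : 'M[algC]_(12 * p) :=
  relmx octa *t 1%:M + relmx octa_compl *t (const_mx 1 - 1%:M).

Definition block_ones p : seq 'M[algC]_(12 * p) :=
  1%:M *t const_mx 1 :: [seq blkmx d *t 1%:M | d <- block_sizes].

Lemma block_ones_quasi_idempotent p :
  {in block_ones p, forall P, exists2 s : algC, s \is a Num.int & P *m P = s *: P}.
Proof.
move=> P; rewrite inE => /predU1P[-> | /mapP[d dds ->]].
  by exists p%:R; rewrite ?rpred_nat // tensmx_mul mulmx1 const1_mx_sqr tensmxZr.
by exists d%:R; rewrite ?rpred_nat // tensmx_mul mulmx1 blkmx_quasi_idempotent // tensmxZl.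
Qed.

Lemma block_ones_comm p : {in block_ones p &, forall P Q, comm_mx P Q}.
Proof.
move=> P Q; rewrite inE => /predU1P[-> | /mapP[d dds ->]];
  rewrite inE => /predU1P[-> | /mapP[d' d'ds ->]];
  apply: comm_mx_tens; rewrite /comm_mx ?mulmx1 ?mul1mx //; exact: blkmx_comm.
Qed.

Lemma block_ones_comm_adj p : {in block_ones p, forall P, comm_mx P (layered_adj p)}.
Proof.
move=> P; rewrite inE => /predU1P[-> | /mapP[d dds ->]];
  apply: comm_mxD; apply: comm_mx_tens;
  rewrite /comm_mx ?mulmxBl ?mulmxBr ?mulmx1 ?mul1mx //;
  by case: (blkmx_comm_octa dds).
Qed.

Lemma layered_adj_int_eigenvector p (w : 'rV_(12 * p)) :
  {in block_ones p, forall P, int_eigenvector w P} -> int_eigenvector w (layered_adj p).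
Proof.
move=> w_ones.
have w_blk d : d \in block_sizes -> int_eigenvector w (blkmx d *t 1%:M).
  by move=> dds; apply/w_ones/mem_behead/(map_f (fun d => blkmx d *t 1%:M)).
have wJ : int_eigenvector w (1%:M *t const_mx 1) by apply: w_ones; rewrite mem_head.
have w_octa : int_eigenvector w (relmx octa *t 1%:M).
  rewrite relmx_octa tensmxDl tensmxNl.
  by apply: int_eigenvectorD (int_eigenvectorN _); apply: w_blk.
have w_compl : int_eigenvector w (relmx octa_compl *t 1%:M).
  rewrite relmx_octa_compl !(tensmxDl, tensmxNl).
  by do ![apply: int_eigenvectorD | apply: int_eigenvectorN | apply: w_blk].
rewrite /layered_adj tensmxDr tensmxNr (tensmx_decr (relmx octa_compl)).
apply: int_eigenvectorD w_octa (int_eigenvectorD (int_eigenvectorM w_compl wJ) _).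
exact: int_eigenvectorN.
Qed.

Lemma layered_adj_integral p a : eigenvalue (layered_adj p) a -> a \is a Num.int.
Proof.
move=> /eigenvalueP[v vA v0].
have [w w0 [wA w_ones]] := common_int_eigenvector (@block_ones_quasi_idempotent p)
  (@block_ones_comm p) (@block_ones_comm_adj p) v0 vA.
exact: int_eigenvector_eigenvalue w0 (layered_adj_int_eigenvector w_ones) wA.
Qed.

Local Close Scope ring_scope.

Definition layered_graph p : rel 'I_(12 * p) := fun u v =>
  let: (i, a) := mxtens_unindex u in let: (k, b) := mxtens_unindex v in
  if a == b then octa i k else octa_compl i k.

Lemma layered_graphE p (i k : 'I_12) (a b : 'I_p) :
  layered_graph (mxtens_index (i, a)) (mxtens_index (k, b)) =
  if a == b then octa i k else octa_compl i k.
Proof. by rewrite /layered_graph !mxtens_indexK. Qed.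

Lemma adjmx_layered p : adjmx (@layered_graph p) = layered_adj p.
Proof.
apply/matrixP=> u v; case: (mxtens_indexP u) => i a; case: (mxtens_indexP v) => k b.
rewrite mxE layered_graphE /layered_adj mxE !tensmxE !mxE.
by case: (a == b); rewrite ?(mulr1, mulr0, subrr, subr0, addr0, add0r).
Qed.

Lemma layered_simple p : simple_graph (@layered_graph p).
Proof.
split=> [u v | u]; case: (mxtens_indexP u) => i a.
  case: (mxtens_indexP v) => k b.
  by rewrite !layered_graphE eq_sym octa_sym octa_compl_sym.
by rewrite layered_graphE eqxx octa_irr.
Qed.

Lemma sum_layers p (a : 'I_p) (x y : nat) :
  \sum_(b < p) (if a == b then x else y) = x + (p - 1) * y.
Proof.
rewrite (bigD1 a) //= eqxx; congr (_ + _).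
rewrite (eq_bigr (fun _ => y)) => [|b]; last by rewrite eq_sym => /negbTE->.
by rewrite sum_nat_const cardC1 card_ord subn1.
Qed.

Lemma layered_regular p : 0 < p -> regular (@layered_graph p) (7 * p - 3).
Proof.
move=> p_gt0 u; case: (mxtens_indexP u) => i a.
have -> : #|[set v | layered_graph (mxtens_index (i, a)) v]| =
    \sum_(k < 12) \sum_(b < p) (if a == b then octa i k : nat else octa_compl i k).
  rewrite -sum1_card big_mkcond (reindex (@mxtens_index 12 p)) /=; last first.
    by exists (@mxtens_unindex 12 p) => ? _; rewrite (mxtens_indexK, mxtens_unindexK).
  rewrite pair_big /=; apply: eq_bigr => -[k b] _.
  by rewrite inE layered_graphE /=; case: (a == b); case: (octa i k); case: (octa_compl i k).
under eq_bigr do rewrite sum_layers.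
rewrite big_split -big_distrr /= (sum12E (octa i)) (sum12E (octa_compl i)).
have i12 : (i : nat) \in iota 0 12 by rewrite mem_iota ltn_ord.
have /andP[/eqP-> /eqP->] := allP octa_degree_check i i12.
lia.
Qed.

Lemma exists_ord_neq2 p (a b : 'I_p) : 2 < p -> exists c : 'I_p, (c != a) && (c != b).
Proof.
move=> p_gt2; have /subsetPn[c _] : ~~ ([set: 'I_p] \subset [set a; b]).
  apply/negP => /subset_leq_card; rewrite cardsT card_ord cards2.
  by case: (a != b) => /= ?; lia.
by rewrite !inE negb_or; exists c.
Qed.

Lemma octa_compl_common_neighbour (i k : 'I_12) :
  exists j : 'I_12, octa_compl i j && octa_compl j k.
Proof.
have /hasP[j] := all12x12P octa_compl_diameter_check i k.
rewrite mem_iota => /andP[_ j12] ijk; by exists (Ordinal j12).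
Qed.

Lemma layered_connected p : 2 < p -> connected_graph (@layered_graph p).
Proof.
move=> p_gt2 u v; case: (mxtens_indexP u) => i a; case: (mxtens_indexP v) => k b.
have [c /andP[ca cb]] := exists_ord_neq2 a b p_gt2.
have [j /andP[ij jk]] := octa_compl_common_neighbour i k.
apply: (@connect_trans _ _ (mxtens_index (j, c))); apply: connect1.
  by rewrite layered_graphE eq_sym (negbTE ca).
by rewrite layered_graphE (negbTE cb).
Qed.

Theorem corollary3p4 :
  forall p : nat, 2 < p ->
  exists e : rel 'I_(12 * p),
    [/\ simple_graph e, connected_graph e, regular e (7 * p - 3)
      & integral_graph e].
Proof.
move=> p p_gt2; exists (@layered_graph p); split.
- exact: layered_simple.
- exact: layered_connected.
- by apply: layered_regular; apply: ltn_trans p_gt2.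
- by move=> a; rewrite adjmx_layered; apply: layered_adj_integral.
Qed.
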